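(* Fix an integer $n\ge 1$. For every formula $\varphi$ in the variables $x_1,\dots,x_n$, $\chi^+([\varphi]_\equiv)$, computed in $\mathcal{NM}^-_n$, equals the number of Boolean assignments $\mu:\{x_1,\dots,x_n\}\to\{0,1\}$ such that $\varphi$ evaluates to $1$ under $\mu$ in the two-element NM chain.
   Context: An NM algebra is an algebra $\langle A,\wedge,\vee,\odot,\to,\bot,\top\rangle$ such that $(A,\wedge,\vee,\bot,\top)$ is a bounded lattice, $\langle A,\odot,\top\rangle$ is a commutative monoid, and for all $x,y,z$: $x\odot y\le z$ iff $x\le y\to z$; $(x\to y)\vee(y\to x)=\top$; $\neg(x\odot y)\vee((x\wedge y)\to(x\odot y))=\top$ where $\neg x:=x\to\bot$; and $\neg\neg x=x$. An NM$^-$ algebra is an NM algebra additionally satisfying $\neg(\neg x^2)^2\leftrightarrow(\neg(\neg x)^2)^2=\top$, where $y^2:=y\odot y$ and $u\leftrightarrow v:=(u\to v)\odot(v\to u)$. $\mathcal{NM}^-_n$ is the free NM$^-$ algebra on $n$ generators, i.e. the Lindenbaum algebra of formulas in $x_1,\dots,x_n$ modulo equivalence in the logic NM$^-$; $[\varphi]_\equiv$ is the class of $\varphi$. It is a finite distributive lattice. A valuation on a distributive lattice $L$ is a map $\nu:L\to\mathbb{R}$ with $\nu(x)+\nu(y)=\nu(x\vee y)+\nu(x\wedge y)$; on a finite distributive lattice it is uniquely determined by its values on join-irreducible elements and on $\bot$. An element is join-irreducible if it is not $\bot$ and $x=y\vee z$ implies $x=y$ or $x=z$. The idempotent Euler characteristic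 $\chi^+:\mathcal{NM}^-_n\to\mathbb{R}$ is the unique valuation with $\chi^+(\bot)=0$ and, for each join-irreducible $g$, $\chi^+(g)=1$ if $g\odot g=g$ and $\chi^+(g)=0$ otherwise. *)

From mathcomp Require Import all_boot.
From Stdlib Require Import Reals.

Set Implicit Arguments.
Unset Strict Implicit.
Unset Printing Implicit Defensive.

Inductive form (n : nat) : Type :=
| FVar of 'I_n
| FBot
| FTop
| FAnd of form n & form n
| FOr of form n & form n
| FConj of form n & form n
| FImp of form n & form n.

Arguments FBot {n}.
Arguments FTop {n}.

Record nm_ops (A : Type) := NMOps {
  o_meet : A -> A -> A;
  o_join : A -> A -> A;
  o_mul  : A -> A -> A;
  o_imp  : A -> A -> A;
  o_bot  : A;
  o_top  : A }.

Section Alg.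
Variables (A : Type) (o : nm_ops A).

Definition o_le (x y : A) : Prop := o_meet o x y = x.
Definition o_neg (x : A) : A := o_imp o x (o_bot o).
Definition o_sq (x : A) : A := o_mul o x x.
Definition o_biimp (u v : A) : A := o_mul o (o_imp o u v) (o_imp o v u).

Record is_NM : Prop := {
  meetC : forall x y, o_meet o x y = o_meet o y x;
  joinC : forall x y, o_join o x y = o_join o y x;
  meetA : forall x y z, o_meet o x (o_meet o y z) = o_meet o (o_meet o x y) z;
  joinA : forall x y z, o_join o x (o_join o y z) = o_join o (o_join o x y) z;
  meetJ : forall x y, o_meet o x (o_join o x y) = x;
  joinM : forall x y, o_join o x (o_meet o x y) = x;
  botP  : forall x, o_le (o_bot o) x;
  topP  : forall x, o_le x (o_top o);
  mulC  : forall x y, o_mul o x y = o_mul o y x;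
  mulA  : forall x y z, o_mul o x (o_mul o y z) = o_mul o (o_mul o x y) z;
  mul1  : forall x, o_mul o x (o_top o) = x;
  resid : forall x y z, o_le (o_mul o x y) z <-> o_le x (o_imp o y z);
  prelin : forall x y, o_join o (o_imp o x y) (o_imp o y x) = o_top o;
  nmax  : forall x y, o_join o (o_neg (o_mul o x y))
                        (o_imp o (o_meet o x y) (o_mul o x y)) = o_top o;
  invol : forall x, o_neg (o_neg x) = x }.

Definition is_NMm : Prop :=
  is_NM /\
  forall x, o_biimp (o_neg (o_sq (o_neg (o_sq x))))
                    (o_sq (o_neg (o_sq (o_neg x)))) = o_top o.

Fixpoint eval (n : nat) (v : 'I_n -> A) (f : form n) : A :=
  match f with
  | FVar i => v i
  | FBot => o_bot o
  | FTop => o_top o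
  | FAnd a b => o_meet o (eval v a) (eval v b)
  | FOr a b => o_join o (eval v a) (eval v b)
  | FConj a b => o_mul o (eval v a) (eval v b)
  | FImp a b => o_imp o (eval v a) (eval v b)
  end.

End Alg.

Definition bool_ops : nm_ops bool := NMOps andb orb andb implb false true.

(** Equivalence in the logic NM^-: by algebraizability, phi and psi are
    logically equivalent iff they are equal in every NM^- algebra under
    every assignment.  The Lindenbaum algebra NM^-_n is form n modulo this. *)
Definition nm_equiv (n : nat) (a b : form n) : Prop :=
  forall (A : Type) (o : nm_ops A), is_NMm o ->
    forall v : 'I_n -> A, eval o v a = eval o v b.

Definition join_irred (n : nat) (g : form n) : Prop :=
  ~ nm_equiv g FBot /\
  forall a b : form n, nm_equiv g (FOr a b) -> nm_equiv g a \/ nm_equiv g b.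

Definition idempotent (n : nat) (g : form n) : Prop :=
  nm_equiv (FConj g g) g.

(** nu is (the representative-level presentation of) a real-valued function on
    NM^-_n satisfying the defining properties of chi^+. *)
Definition is_chi_plus (n : nat) (nu : form n -> R) : Prop :=
  (forall a b, nm_equiv a b -> nu a = nu b) /\
  (forall a b, (nu a + nu b = nu (FOr a b) + nu (FAnd a b))%R) /\
  nu FBot = 0%R /\
  (forall g, join_irred g ->
     (idempotent g -> nu g = 1%R) /\ (~ idempotent g -> nu g = 0%R)).

From Pilot Require Import Defs.
From mathcomp Require Import all_boot.
From Stdlib Require Import Reals.
From Stdlib Require Import Classical Lia Lra.
From mathcomp Require boolp classical_sets.
From mathcomp Require Import zify.

(* Two formulas are NM^- equivalent iff they agree on the finite NM chain
   {0, ..., 4n+5}.  If a valuation in an NM^- algebra separates them, a maximal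
   filter avoiding the implication between their values (Zorn) is linear by
   prelinearity; on the linearly ordered quotient, the elements equivalent to
   ⊥, ⊤, the x_i or the ¬x_i are closed under the operations and embed into the
   chain, because the NM^- axiom forbids a fixpoint of negation.
   Hence the class of φ is its truth function on the chain.  Rounding each truth
   value to the nearer end of the chain is a homomorphism onto {0, 1}, and the
   number of Boolean models is a valuation.  On a join irreducible g it is at
   most 1 (split g along x_i ⇒ ¬x_i and ¬x_i ⇒ x_i), it is 1 when g is
   idempotent (round a point where g is nonzero), and 0 otherwise
   (g = g² ∨ (g ∧ ¬g)).  Any other valuation with these values agrees with it,
   by induction on the sum of the truth values of φ over the chain. *)

Set Implicit Arguments.
Unset Strict Implicit.
Unset Printing Implicit Defensive.

(** * Finite NM chains *)

Section Chain.
Variable T : nat.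

Definition nm_mul (a b : nat) := if a + b <= T then 0 else minn a b.
Definition nm_neg (a : nat) := T - a.
Definition nm_imp (a b : nat) := nm_neg (nm_mul a (nm_neg b)).

Local Notation C := 'I_T.+1.

Definition chain_ops : nm_ops C := NMOps
  (fun x y : C => inord (minn x y)) (fun x y : C => inord (maxn x y))
  (fun x y : C => inord (nm_mul x y)) (fun x y : C => inord (nm_imp x y))
  (inord 0) (inord T).

Lemma chain_meetE (x y : C) : o_meet chain_ops x y = minn x y :> nat.
Proof. by rewrite inordK //; have := ltn_ord x; lia. Qed.

Lemma chain_joinE (x y : C) : o_join chain_ops x y = maxn x y :> nat.
Proof. by rewrite inordK //; have := ltn_ord x; have := ltn_ord y; lia. Qed.

Lemma chain_mulE (x y : C) : o_mul chain_ops x y = nm_mul x y :> nat.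
Proof. by rewrite inordK // /nm_mul; have := ltn_ord x; case: ifP; lia. Qed.

Lemma chain_impE (x y : C) : o_imp chain_ops x y = nm_imp x y :> nat.
Proof. by rewrite inordK // /nm_imp /nm_neg; lia. Qed.

Lemma chain_botE : o_bot chain_ops = 0 :> nat.
Proof. by rewrite inordK. Qed.

Lemma chain_topE : o_top chain_ops = T :> nat.
Proof. by rewrite inordK. Qed.

Lemma chain_leE (x y : C) : o_le chain_ops x y <-> x <= y.
Proof.
rewrite /o_le; split=> [/(congr1 (@nat_of_ord _))|xy]; first by rewrite chain_meetE; lia.
by apply: ord_inj; rewrite chain_meetE; lia.
Qed.

Definition chainE :=
  (chain_meetE, chain_joinE, chain_mulE, chain_impE, chain_botE, chain_topE).

End Chain.

(* Case analysis on the innermost conditionals first, so that [lia] sees only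
   arithmetic. *)
Ltac split_ifs :=
  repeat match goal with
  | |- context [if ?c then _ else _] =>
      lazymatch c with
      | context [if _ then _ else _] => fail
      | _ => case: (boolP c) => ?
      end
  end.

Ltac ord_bounds :=
  repeat match goal with
  | x : 'I__ |- _ =>
      lazymatch goal with
      | _ : is_true (nat_of_ord x < _) |- _ => fail
      | _ => have := ltn_ord x; move=> ?
      end
  end.

Ltac chain_arith :=
  rewrite /o_le /o_neg /o_biimp /o_sq; intros; ord_bounds;
  try apply: ord_inj; rewrite ?chainE /nm_imp /nm_mul /nm_neg; split_ifs; lia.

Section ChainLaws.
Variable T : nat.
Local Notation o := (chain_ops T).

Lemma chain_NM : is_NM o.
Proof.
split; try by move=> *; chain_arith.
by move=> x y z; rewrite !chain_leE !chainE; chain_arith.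
Qed.

Lemma chain_negE x : o_neg o x = T - x :> nat.
Proof. by chain_arith. Qed.

Lemma chain_sq_neg_sqE x :
  0 < T -> o_sq o (o_neg o (o_sq o x)) = (if T < x.*2 then 0 else T) :> nat.
Proof. by chain_arith. Qed.

Lemma chain_meet_prelin g x y :
  o_join o (o_meet o g (o_imp o x y)) (o_meet o g (o_imp o y x)) = g.
Proof.
have := congr1 (@nat_of_ord _) (prelin chain_NM x y).
by rewrite !chainE => xy; apply: ord_inj; rewrite !chainE; have := ltn_ord g; lia.
Qed.

Lemma chain_sq_join_meet_neg x : o_join o (o_sq o x) (o_meet o x (o_neg o x)) = x.
Proof. by chain_arith. Qed.

End ChainLaws.

(* Both sides of the NM^- axiom take the value [T < 2x ? T : 0]; the oddness of
   T rules out the fixpoint [2x = T] of negation. *)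
Lemma chain_NMm k : is_NMm (chain_ops k.*2.+1).
Proof.
split; first exact: chain_NM.
set T := k.*2.+1 => x.
set u := o_neg _ _; set v := o_sq _ _.
have -> : u = v.
  apply: ord_inj; rewrite /u /v chain_negE !chain_sq_neg_sqE // chain_negE.
  by case: ifP; case: ifP; lia.
by chain_arith.
Qed.

Section ChainTruth.
Variable k : nat.
Local Notation T := k.*2.+1.
Local Notation o := (chain_ops T).

(* Rounding to the nearest end of the odd chain is a homomorphism onto {0, 1}. *)
Definition high (x : 'I_T.+1) := T < x.*2.

Lemma high_meet x y : high (o_meet o x y) = high x && high y.
Proof. by rewrite /high chainE; apply/idP/andP; lia. Qed.

Lemma high_join x y : high (o_join o x y) = high x || high y.
Proof. by rewrite /high chainE; apply/idP/orP; lia. Qed.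

Lemma high_mul x y : high (o_mul o x y) = high x && high y.
Proof.
rewrite /high chainE /nm_mul; have := ltn_ord x; have := ltn_ord y.
by case: ifP => ? ? ?; apply/idP/andP; lia.
Qed.

Lemma high_imp x y : high (o_imp o x y) = high x ==> high y.
Proof.
rewrite /high chainE /nm_imp /nm_mul /nm_neg; have := ltn_ord x; have := ltn_ord y.
by case: ifP => ? ? ?; apply/idP/implyP; lia.
Qed.

Lemma high_eval n (w : 'I_n -> 'I_T.+1) t :
  high (eval o w t) = eval bool_ops (fun i => high (w i)) t.
Proof.
elim: t => [i|||a IHa b IHb|a IHa b IHb|a IHa b IHb|a IHa b IHb] //=;
  rewrite ?high_meet ?high_join ?high_mul ?high_imp ?IHa ?IHb //;
  by rewrite /high chainE; lia.
Qed.

End ChainTruth.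

Lemma In_mem (T : eqType) (x : T) s : x \in s -> List.In x s.
Proof. by elim: s => //= y s IHs; rewrite inE => /orP [/eqP ->|/IHs]; [left | right]. Qed.

Lemma count_lt_sub (T : Type) (a1 a2 : pred T) s :
  subpred a1 a2 -> (exists2 z, List.In z s & a2 z && ~~ a1 z) ->
  count a1 s < count a2 s.
Proof.
move=> sub12; elim: s => [[z []]|x s IHs [z /= [<-|zs] /andP[a2z a1z]]].
  by rewrite a2z (negbTE a1z) add0n add1n ltnS; apply: sub_count.
have := IHs (ex_intro2 _ _ z zs (introT andP (conj a2z a1z))).
by case a1x: (a1 x); rewrite ?(sub12 _ a1x) /=; case: (a2 x) => /=; lia.
Qed.

(** * NM algebras *)

Section NMAlgebra.
Variables (A : Type) (o : nm_ops A) (H : is_NM o).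

Local Notation "x ⊓ y" := (o_meet o x y) (at level 40, left associativity).
Local Notation "x ⊔ y" := (o_join o x y) (at level 50, left associativity).
Local Notation "x ⊙ y" := (o_mul o x y) (at level 40, left associativity).
Local Notation "x ⇒ y" := (o_imp o x y) (at level 55, right associativity).
Local Notation "¬ x" := (o_neg o x) (at level 35, right associativity).
Local Notation "⊥" := (o_bot o).
Local Notation "⊤" := (o_top o).
Local Notation "x ≼ y" := (o_le o x y) (at level 70, no associativity).

Lemma resid_imp x y z : x ⊙ y ≼ z -> x ≼ y ⇒ z.
Proof. by move/(resid H). Qed.

Lemma resid_mul x y z : x ≼ y ⇒ z -> x ⊙ y ≼ z.
Proof. by move/(resid H). Qed.

Lemma meetxx x : x ⊓ x = x.
Proof. by have := meetJ H x (x ⊓ x); rewrite joinM. Qed.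

Lemma lexx x : x ≼ x.
Proof. exact: meetxx. Qed.

Lemma le_trans x y z : x ≼ y -> y ≼ z -> x ≼ z.
Proof. by rewrite /o_le => xy yz; rewrite -xy -meetA // yz. Qed.

Lemma le_anti x y : x ≼ y -> y ≼ x -> x = y.
Proof. by rewrite /o_le => xy yx; rewrite -xy meetC. Qed.

Lemma leIl x y : x ⊓ y ≼ x.
Proof. by rewrite /o_le (meetC H x y) -meetA // meetxx. Qed.

Lemma lexI x y z : z ≼ x -> z ≼ y -> z ≼ x ⊓ y.
Proof. by rewrite /o_le => zx zy; rewrite meetA // zx zy. Qed.

Lemma leEjoin x y : x ≼ y <-> x ⊔ y = y.
Proof.
rewrite /o_le; split => [<-|<-]; last exact: meetJ.
by rewrite joinC // meetC // joinM.
Qed.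

Lemma leUl x y : x ≼ x ⊔ y.
Proof. exact: meetJ. Qed.

Lemma leUr x y : y ≼ x ⊔ y.
Proof. rewrite joinC //; exact: meetJ. Qed.

Lemma leUx x y z : x ≼ z -> y ≼ z -> x ⊔ y ≼ z.
Proof. by move=> /leEjoin xz /leEjoin yz; apply/leEjoin; rewrite -joinA // yz xz. Qed.

Lemma lex1 x : x ≼ ⊤.
Proof. exact: topP. Qed.

Lemma le0x x : ⊥ ≼ x.
Proof. exact: botP. Qed.

Lemma joinx1 x : x ⊔ ⊤ = ⊤.
Proof. exact/leEjoin/lex1. Qed.

Lemma mulx1 x : x ⊙ ⊤ = x.
Proof. exact: mul1. Qed.

Lemma mul1x x : ⊤ ⊙ x = x.
Proof. by rewrite mulC // mulx1. Qed.

Lemma mulAC x y z : x ⊙ y ⊙ z = x ⊙ z ⊙ y.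
Proof. by rewrite -!mulA // (mulC H y). Qed.

Lemma mulACA x y z t : x ⊙ y ⊙ (z ⊙ t) = x ⊙ z ⊙ (y ⊙ t).
Proof. by rewrite -!mulA // (mulA H y) (mulC H y z) -mulA. Qed.

Lemma modus_ponens x y : x ⊙ (x ⇒ y) ≼ y.
Proof. by rewrite mulC //; apply/resid_mul/lexx. Qed.

Lemma le_mul2r x y z : x ≼ y -> x ⊙ z ≼ y ⊙ z.
Proof. by move=> xy; apply/resid_mul/(le_trans xy)/resid_imp/lexx. Qed.

Lemma le_mul2l x y z : x ≼ y -> z ⊙ x ≼ z ⊙ y.
Proof. by rewrite !(mulC H z); apply: le_mul2r. Qed.

Lemma le_mul x y x' y' : x ≼ x' -> y ≼ y' -> x ⊙ y ≼ x' ⊙ y'.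
Proof. by move=> xx' yy'; apply: le_trans (le_mul2r _ xx') (le_mul2l _ yy'). Qed.

Lemma le_mul_l x y : x ⊙ y ≼ x.
Proof. by rewrite -{2}(mulx1 x); apply/le_mul2l/lex1. Qed.

Lemma le_mul_r x y : x ⊙ y ≼ y.
Proof. by rewrite mulC //; apply: le_mul_l. Qed.

Lemma le_mul_meet x y : x ⊙ y ≼ x ⊓ y.
Proof. exact: lexI (le_mul_l x y) (le_mul_r x y). Qed.

Lemma le_impE x y : x ≼ y <-> x ⇒ y = ⊤.
Proof.
split=> [xy|xy]; first by apply/le_anti/resid_imp; [apply: lex1 | rewrite mul1x].
by rewrite -(mul1x x); apply: resid_mul; rewrite xy; apply: lexx.
Qed.

Lemma mul0x x : ⊥ ⊙ x = ⊥.
Proof. by apply: le_anti (le0x _); apply/resid_mul/le0x. Qed.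

Lemma mulx0 x : x ⊙ ⊥ = ⊥.
Proof. by rewrite mulC // mul0x. Qed.

Lemma negK x : ¬ ¬ x = x.
Proof. exact: invol. Qed.

Lemma neg1 : ¬ ⊤ = ⊥.
Proof. by apply/le_anti/le0x; rewrite -(mul1x (¬ ⊤)); apply: modus_ponens. Qed.

Lemma neg0 : ¬ ⊥ = ⊤.
Proof. exact/le_impE/lexx. Qed.

Lemma mulNx_le0 x : ¬ x ⊙ x ≼ ⊥.
Proof. by rewrite mulC //; apply: modus_ponens. Qed.

Lemma imp_mul x y z : x ⊙ y ⇒ z = x ⇒ y ⇒ z.
Proof.
apply: le_anti; apply: resid_imp.
  by apply: resid_imp; rewrite -mulA // mulC //; apply: modus_ponens.
by rewrite mulA //; apply/resid_mul/resid_mul/lexx.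
Qed.

Lemma impEneg x y : x ⇒ y = ¬ (x ⊙ ¬ y).
Proof. by rewrite /o_neg imp_mul -/(o_neg o y) -/(o_neg o (¬ y)) negK. Qed.

Lemma imp_trans x y z : (x ⇒ y) ⊙ (y ⇒ z) ≼ x ⇒ z.
Proof.
apply: resid_imp; rewrite mulAC (mulC H (x ⇒ y)).
exact: le_trans (le_mul2r _ (modus_ponens x y)) (modus_ponens y z).
Qed.

(** * Filters *)

Definition upward (F : A -> Prop) := forall x y, F x -> x ≼ y -> F y.
Definition mul_closed (F : A -> Prop) := forall x y, F x -> F y -> F (x ⊙ y).

Record filter (F : A -> Prop) : Prop := Filter {
  filter1 : F ⊤;
  filter_up : upward F;
  filterM : mul_closed F }.

Section Filter.
Variables (F : A -> Prop) (HF : filter F).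

(* The preorder of the quotient algebra A / F. *)
Definition leF x y := F (x ⇒ y).
Definition eqF x y := leF x y /\ leF y x.

Lemma leF_of_le x y : x ≼ y -> leF x y.
Proof. by move/le_impE; rewrite /leF => ->; apply: filter1. Qed.

Lemma leF_refl x : leF x x.
Proof. exact/leF_of_le/lexx. Qed.

Lemma leF_trans x y z : leF x y -> leF y z -> leF x z.
Proof. by move=> xy yz; apply: (filter_up HF) (imp_trans x y z); apply: filterM. Qed.

Lemma leF_mp x y : F x -> leF x y -> F y.
Proof. by move=> Fx xy; apply: (filter_up HF) (modus_ponens x y); apply: filterM. Qed.

Lemma eqF_refl x : eqF x x.
Proof. by split; apply: leF_refl. Qed.

Lemma eqF_trans x y z : eqF x y -> eqF y z -> eqF x z.
Proof. by move=> [xy yx] [yz zy]; split; apply: leF_trans; eassumption. Qed.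

Lemma leF_congr (f : A -> A) :
  (forall x x', x ⇒ x' ≼ f x ⇒ f x') -> forall x x', leF x x' -> leF (f x) (f x').
Proof. by move=> fP x x' xx'; apply: (filter_up HF) (fP x x'). Qed.

Lemma leF_mul2r x x' y : leF x x' -> leF (x ⊙ y) (x' ⊙ y).
Proof.
apply: (@leF_congr (o_mul o ^~ y)) => {}x {}x'; apply: resid_imp.
by rewrite mulA //; apply: le_mul2r; rewrite mulC //; apply: modus_ponens.
Qed.

Lemma leF_mul x x' y y' : leF x x' -> leF y y' -> leF (x ⊙ y) (x' ⊙ y').
Proof.
move=> xx' yy'; apply: leF_trans (leF_mul2r _ xx') _.
by rewrite !(mulC H x'); apply: leF_mul2r.
Qed.

Lemma leF_imp2l x y y' : leF y y' -> leF (x ⇒ y) (x ⇒ y').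
Proof.
apply: (@leF_congr (o_imp o x)) => {}y {}y'.
by apply: resid_imp; rewrite mulC //; apply: imp_trans.
Qed.

Lemma leF_imp2r x x' y : leF x' x -> leF (x ⇒ y) (x' ⇒ y).
Proof. by move=> x'x; apply: (filter_up HF) x'x _; apply/resid_imp/imp_trans. Qed.

Lemma leF_neg x y : leF x y -> leF (¬ y) (¬ x).
Proof. exact: leF_imp2r. Qed.

Lemma eqF_neg x y : eqF x y -> eqF (¬ x) (¬ y).
Proof. by move=> [xy yx]; split; apply: leF_neg. Qed.

Lemma eqF_meetl x y : leF x y -> eqF (x ⊓ y) x.
Proof.
move=> xy; split; first exact/leF_of_le/leIl.
apply: (filter_up HF) xy _; apply/resid_imp/lexI; first exact: le_mul_r.
by rewrite mulC //; apply: modus_ponens.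
Qed.

Lemma eqF_joinr x y : leF x y -> eqF (x ⊔ y) y.
Proof.
move=> xy; split; last exact/leF_of_le/leUr.
apply: (filter_up HF) xy _; apply/resid_imp; rewrite mulC //.
by apply/resid_mul/leUx; apply: resid_imp; [apply: modus_ponens | apply: le_mul_l].
Qed.

(* For an NM algebra, primeness of a filter amounts to linearity of A / F. *)
Definition linear := forall x y, leF x y \/ leF y x.

Section LinearFilter.
Hypothesis HL : linear.

Lemma linear_join x y : F (x ⊔ y) -> F x \/ F y.
Proof.
move=> Fxy; case: (HL x y) => [xy|yx]; [right | left].
  by apply: leF_mp Fxy _; case: (eqF_joinr xy).
by rewrite joinC // in Fxy; apply: leF_mp Fxy _; case: (eqF_joinr yx).
Qed.

Lemma leF_total x y : ~ leF x y -> leF y x.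
Proof. by case: (HL x y). Qed.

(* The NM axiom: in A / F the product is the meet, or it vanishes. *)
Lemma eqF_mul_meet x y : ~ leF x (¬ y) -> eqF (x ⊙ y) (x ⊓ y).
Proof.
move=> xNy; split; first exact/leF_of_le/le_mul_meet.
have : F (¬ (x ⊙ y) ⊔ (x ⊓ y ⇒ x ⊙ y)) by rewrite nmax //; apply: filter1.
by case/linear_join => // Fn; case: xNy; rewrite /leF /o_neg -imp_mul.
Qed.

End LinearFilter.

Lemma eqF_mul0 x y : leF x (¬ y) -> eqF (x ⊙ y) ⊥.
Proof.
move=> xNy; split; last exact/leF_of_le/le0x.
exact: leF_trans (leF_mul2r _ xNy) (leF_of_le (mulNx_le0 y)).
Qed.

Lemma leF_sq_neg_sq y : leF y (¬ y) -> leF ⊤ (o_sq o (¬ o_sq o y)).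
Proof.
move=> yNy; have := leF_neg (proj1 (eqF_mul0 yNy)); rewrite neg0 => h.
by have := leF_mul h h; rewrite mul1x.
Qed.

(* The NM^- axiom excludes a fixpoint of negation in a proper A / F. *)
Hypothesis NMm_ax :
  forall x, o_biimp o (¬ o_sq o (¬ o_sq o x)) (o_sq o (¬ o_sq o (¬ x))) = ⊤.
Hypothesis F_proper : ~ F ⊥.

Lemma no_neg_fixpoint x : ~ eqF x (¬ x).
Proof.
move=> [xNx Nxx].
set u := ¬ o_sq o (¬ o_sq o x); set v := o_sq o (¬ o_sq o (¬ x)).
have v1 : leF ⊤ v by apply: leF_sq_neg_sq; rewrite negK.
have u0 : leF u ⊥ by rewrite -neg1; apply/leF_neg/leF_sq_neg_sq.
have vu : leF (v ⇒ u) (¬ ⊤) := leF_trans (leF_imp2r _ v1) (leF_imp2l _ u0).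
have : F (o_biimp o u v) by rewrite NMm_ax; apply: filter1.
move/leF_mp; apply: contra_not F_proper; apply; rewrite /o_biimp.
apply: leF_trans (leF_mul (leF_refl _) vu) _.
by apply/leF_of_le; rewrite neg1 mulx0; apply: lexx.
Qed.

End Filter.

(** * Existence of linear filters *)

Fixpoint mpow p k := if k is k'.+1 then p ⊙ mpow p k' else ⊤.

Lemma mpowD p k l : mpow p (k + l) = mpow p k ⊙ mpow p l.
Proof. by elim: k => [|k IHk] /=; rewrite ?mul1x // IHk mulA. Qed.

Lemma le_mpowD p k l : mpow p (k + l) ≼ mpow p k.
Proof. by rewrite mpowD; apply: le_mul_l. Qed.

Lemma join_mul1 u w w' : u ⊔ w = ⊤ -> u ⊔ w' = ⊤ -> u ⊔ (w ⊙ w') = ⊤.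
Proof.
move=> uw uw'; apply: le_anti (lex1 _) _; rewrite -(mul1x ⊤) -{1}uw -uw'.
apply/resid_mul/leUx; apply: resid_imp; first exact: le_trans (le_mul_l _ _) (leUl _ _).
rewrite mulC //; apply/resid_mul/leUx; apply: resid_imp.
  exact: le_trans (le_mul_l _ _) (leUl _ _).
by rewrite mulC //; apply: le_trans (leUr u _); apply: le_mul2r; apply: lexx.
Qed.

Lemma join_mpow1 p q : p ⊔ q = ⊤ -> forall k l, mpow p k ⊔ mpow q l = ⊤.
Proof.
move=> pq; have pql l : p ⊔ mpow q l = ⊤.
  by elim: l => [|l IHl] /=; [apply: joinx1 | apply: join_mul1].
elim=> [|k IHk] l /=; first by rewrite joinC // joinx1.
by rewrite joinC //; apply: join_mul1; rewrite joinC.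
Qed.

Definition avoids c (S : A -> Prop) := [/\ upward S, mul_closed S & ~ S c].

Section MaximalAvoiding.
Variables (c : A) (M : A -> Prop).
Hypotheses (c_neq1 : c <> ⊤) (M_avoids : avoids c M).
Hypothesis M_max : forall S, avoids c S -> (forall x, M x -> S x) -> forall x, S x -> M x.

Let M_up : upward M. Proof. by case: M_avoids. Qed.
Let M_mul : mul_closed M. Proof. by case: M_avoids. Qed.

Lemma maximal_top : M ⊤.
Proof.
apply: (M_max (S := fun x => M x \/ x = ⊤)); [split | by left | by right].
- move=> x y [Mx|->] xy; first by left; apply: M_up xy.
  by right; apply: le_anti (lex1 _) xy.
- by move=> x y [Mx|->] [My|->]; rewrite ?mulx1 ?mul1x; auto.
- by case: M_avoids => _ _ Mc [].
Qed.

(* The filter generated by M and p must contain c. *)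
Lemma maximal_generated p :
  ~ M p -> exists f k, M f /\ f ⊙ mpow p k ≼ c.
Proof.
move=> Mp; apply: NNPP => noc; apply: Mp.
pose S z := exists f k, M f /\ f ⊙ mpow p k ≼ z.
apply: (M_max (S := S)).
- split.
  + by move=> x y [f [k [Mf fx]]] xy; exists f, k; split; last apply: le_trans xy.
  + move=> x y [f [k [Mf fx]]] [f' [k' [Mf' fy]]].
    exists (f ⊙ f'), (k + k'); split; first exact: M_mul.
    by rewrite mpowD mulACA; apply: le_mul.
  + by move=> Sc; apply: noc.
- by move=> x Mx; exists x, 0; split=> //=; rewrite mulx1; apply: lexx.
- by exists ⊤, 1; split; [apply: maximal_top | rewrite /= mulx1 mul1x; apply: lexx].
Qed.

(* If neither x ⇒ y nor y ⇒ x were in M, raising both witnesses to a common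
   power would put c in M, by prelinearity. *)
Lemma maximal_linear : linear M.
Proof.
move=> x y; apply: NNPP => /not_or_and [nxy nyx].
have [f1 [k1 [M1 le1]]] := maximal_generated nxy.
have [f2 [k2 [M2 le2]]] := maximal_generated nyx.
case: M_avoids => _ _; apply; apply: M_up (M_mul M1 M2) _.
rewrite -[f1 ⊙ f2]mulx1 -(join_mpow1 (prelin H x y) (k1 + k2) (k1 + k2)) mulC //.
apply/resid_mul/leUx; apply: resid_imp; rewrite mulC //.
  by apply: le_trans le1; apply: le_mul; [apply: le_mul_l | apply: le_mpowD].
by apply: le_trans le2; apply: le_mul; [apply: le_mul_r | rewrite addnC; apply: le_mpowD].
Qed.

End MaximalAvoiding.

Lemma exists_linear_filter c : c <> ⊤ -> exists F, [/\ filter F, linear F & ~ F c].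
Proof.
move=> c_neq1.
have union_avoids (Fs : classical_sets.set (classical_sets.set A)) :
    classical_sets.subset Fs (avoids c) ->
    classical_sets.total_on Fs classical_sets.subset ->
    avoids c (classical_sets.bigcup Fs (fun X => X)).
  move=> Fs_avoid Fs_chain; split.
  - move=> x y [X FX Xx] xy; exists X => //.
    by have [upX _ _] := Fs_avoid X FX; apply: upX xy.
  - move=> x y [X FX Xx] [Y FY Yy].
    have [[upX mulX _] [upY mulY _]] := (Fs_avoid X FX, Fs_avoid Y FY).
    by case: (Fs_chain X Y FX FY) => [XY|YX]; [exists Y | exists X]; auto.
  - by move=> [X FX Xc]; have [_ _] := Fs_avoid X FX; apply.
have [M [M_avoids M_max]] := classical_sets.Zorn_bigcup union_avoids.
have M_max' S : avoids c S -> (forall x, M x -> S x) -> forall x, S x -> M x.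
  move=> S_avoids MS x Sx; apply: NNPP => Mx.
  by apply: (M_max S) S_avoids; split=> // /(_ x Sx).
have [upM mulM Mc] := M_avoids.
exists M; split; last by [].
- by split=> //; apply: maximal_top M_max'.
- exact: maximal_linear M_max'.
Qed.

(** * Embedding a finite part of a linear quotient into a chain *)

Section Embedding.
Variables (F : A -> Prop) (HF : filter F) (HL : linear F).
Hypothesis NMm_ax :
  forall x, o_biimp o (¬ o_sq o (¬ o_sq o x)) (o_sq o (¬ o_sq o (¬ x))) = ⊤.
Hypothesis F_proper : ~ F ⊥.
Variable s : seq A.
Hypotheses (s0 : List.In ⊥ s) (sN : forall y, List.In y s -> List.In (¬ y) s).
Variable T : nat.
Hypothesis T_def : T = (size s).*2.+1.

Local Notation leF := (leF F).
Local Notation eqF := (eqF F).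

Definition leFb x y := boolp.asbool (leF x y).

Lemma leFbP x y : reflect (leF x y) (leFb x y).
Proof. exact: boolp.asboolP. Qed.

Definition rank x := count (fun y => ~~ leFb x y) s.

(* [height x] counts the members of s strictly below x and those above ¬x.  It is
   strictly monotone on the elements represented by s, [height (¬x)] is
   [2 |s| - height x], and it misses [|s|] because negation has no fixpoint in
   A / F.  Moving the lower half up by one frees 0 and T for ⊥ and ⊤. *)
Definition height x := rank x + (size s - rank (¬ x)).

Definition embed x :=
  if leFb x ⊥ then 0 else if leFb ⊤ x then T
  else if height x < size s then (height x).+1 else height x.

Definition represented x := exists2 y, List.In y s & eqF x y.

Lemma leFb_eqF x x' y y' : eqF x x' -> eqF y y' -> leFb x y = leFb x' y'.
Proof.
move=> [xx' x'x] [yy' y'y]; apply/leFbP/leFbP => xy.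
  exact: (leF_trans HF x'x (leF_trans HF xy yy')).
exact: (leF_trans HF xx' (leF_trans HF xy y'y)).
Qed.

Lemma rank_eqF x y : eqF x y -> rank x = rank y.
Proof. by move=> xy; apply: eq_count => z; rewrite (leFb_eqF xy (eqF_refl HF z)). Qed.

Lemma embed_eqF x y : eqF x y -> embed x = embed y.
Proof.
move=> xy; rewrite /embed /height (rank_eqF xy) (rank_eqF (eqF_neg HF xy)).
by rewrite (leFb_eqF xy (eqF_refl HF _)) (leFb_eqF (eqF_refl HF _) xy).
Qed.

Lemma represented_eqF x y : eqF x y -> represented y -> represented x.
Proof. by move=> xy [z zs yz]; exists z => //; apply: (eqF_trans HF xy yz). Qed.

Lemma represented_s y : List.In y s -> represented y.
Proof. by move=> ys; exists y => //; apply: eqF_refl. Qed.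

Lemma represented_neg x : represented x -> represented (¬ x).
Proof. by move=> [y ys xy]; exists (¬ y); [apply: sN | apply: eqF_neg]. Qed.

Lemma represented0 : represented ⊥.
Proof. exact: represented_s. Qed.

Lemma represented1 : represented ⊤.
Proof. by rewrite -neg0; apply/represented_neg/represented0. Qed.

Lemma rank_le x : rank x <= size s.
Proof. exact: count_size. Qed.

Lemma rank_lt x y : represented y -> ~ leF x y -> rank y < rank x.
Proof.
move=> [z zs [yz zy]] xy; apply: count_lt_sub.
  move=> u /negP yu; apply/negP=> /leFbP xu; apply/yu/leFbP.
  exact: (leF_trans HF (leF_total HL xy) xu).
exists z => //; apply/andP; split; last by rewrite negbK; apply/leFbP.
by apply/negP=> /leFbP xz; apply: xy; apply: (leF_trans HF xz zy).
Qed.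

Lemma rank_neg_le x y : leF y x -> rank (¬ x) <= rank (¬ y).
Proof.
move=> yx; apply: sub_count => z /negP Nxz; apply/negP=> /leFbP Nyz.
by apply/Nxz/leFbP; apply: (leF_trans HF (leF_neg HF yx) Nyz).
Qed.

Lemma height_lt x y : represented y -> ~ leF x y -> height y < height x.
Proof.
move=> ry xy; have := rank_lt ry xy; have := rank_neg_le (leF_total HL xy).
by have := rank_le (¬ x); have := rank_le (¬ y); rewrite /height; lia.
Qed.

Lemma height_le x : height x <= (size s).*2.
Proof. by have := rank_le x; rewrite /height; lia. Qed.

Lemma height_neg x : height (¬ x) = (size s).*2 - height x.
Proof. by rewrite /height negK; have := rank_le x; have := rank_le (¬ x); lia. Qed.

Lemma height_neq x : represented x -> height x <> size s.
Proof.
move=> rx hx; have hNx : height (¬ x) = size s by rewrite height_neg hx; lia.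
apply: (no_neg_fixpoint HF NMm_ax F_proper (x := x)).
split; apply: NNPP => nle.
- by have := height_lt (represented_neg rx) nle; lia.
- by have := height_lt rx nle; lia.
Qed.

Lemma embed_le_top x : embed x <= T.
Proof. by rewrite /embed; have := height_le x; repeat case: ifP => ?; lia. Qed.

Lemma embed0 : embed ⊥ = 0.
Proof. by rewrite /embed; case: leFbP => // - []; apply: (leF_refl HF). Qed.

Lemma not_leF10 : ~ leF ⊤ ⊥.
Proof. by rewrite /NMAlgebra.leF -/(¬ ⊤) neg1. Qed.

Lemma embed1 : embed ⊤ = T.
Proof.
rewrite /embed; case: leFbP => [/not_leF10 //|_].
by case: leFbP => // - []; apply: (leF_refl HF).
Qed.

Lemma embed_lt x y : represented x -> represented y -> ~ leF x y -> embed y < embed x.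
Proof.
move=> rx ry xy.
have x0 : ~ leF x ⊥ by move=> x0; apply/xy/(leF_trans HF x0)/(leF_of_le HF)/le0x.
have y1 : ~ leF ⊤ y by move=> y1; apply/xy/(leF_trans HF _ y1)/(leF_of_le HF)/lex1.
have s_gt0 : 0 < size s by case: (s) s0.
move: (height_neq rx) (height_neq ry) (height_lt ry xy) (height_le x) (height_le y).
rewrite /embed; case: (leFbP x ⊥) => // _; case: (leFbP ⊤ y) => // _ *.
by case: (leFbP y ⊥) => _; case: (leFbP ⊤ x) => _; repeat case: ifP => ?; lia.
Qed.

Lemma embed_le x y : represented x -> represented y -> leF x y -> embed x <= embed y.
Proof.
move=> rx ry xy; case: (classic (leF y x)) => [yx|yx].
  by rewrite (embed_eqF (conj xy yx)).
exact/ltnW/embed_lt.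
Qed.

Lemma leFb_neg x y : leFb (¬ x) (¬ y) = leFb y x.
Proof.
apply/leFbP/leFbP => [|yx]; last exact: leF_neg.
by move/(leF_neg HF); rewrite !negK.
Qed.

Lemma embed_neg x : represented x -> embed (¬ x) = T - embed x.
Proof.
move=> rx; have e0 : leFb (¬ x) ⊥ = leFb ⊤ x by rewrite -neg1 leFb_neg.
have e1 : leFb ⊤ (¬ x) = leFb x ⊥ by rewrite -neg0 leFb_neg.
rewrite /embed e0 e1 height_neg; move: (height_neq rx) (height_le x).
case: (leFbP ⊤ x) => [x1|_]; case: (leFbP x ⊥) => [x0|_] //.
  by case: not_leF10; apply: (leF_trans HF x1 x0).
all: by repeat case: ifP => ?; lia.
Qed.

Lemma embed_meet x y : represented x -> represented y ->
  represented (x ⊓ y) /\ embed (x ⊓ y) = minn (embed x) (embed y).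
Proof.
move=> rx ry; case: (classic (leF x y)) => xy.
  have e := eqF_meetl HF xy; split; first exact: represented_eqF e rx.
  by rewrite (embed_eqF e); have := embed_le rx ry xy; lia.
have e := eqF_meetl HF (leF_total HL xy); rewrite meetC // in e.
split; first exact: represented_eqF e ry.
by rewrite (embed_eqF e); have := embed_lt rx ry xy; lia.
Qed.

Lemma embed_join x y : represented x -> represented y ->
  represented (x ⊔ y) /\ embed (x ⊔ y) = maxn (embed x) (embed y).
Proof.
move=> rx ry; case: (classic (leF x y)) => xy.
  have e := eqF_joinr HF xy; split; first exact: represented_eqF e ry.
  by rewrite (embed_eqF e); have := embed_le rx ry xy; lia.
have e := eqF_joinr HF (leF_total HL xy); rewrite joinC // in e.
split; first exact: represented_eqF e rx.
by rewrite (embed_eqF e); have := embed_lt rx ry xy; lia.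
Qed.

Lemma embed_mul x y : represented x -> represented y ->
  represented (x ⊙ y) /\ embed (x ⊙ y) = nm_mul T (embed x) (embed y).
Proof.
move=> rx ry; have := embed_le_top y; rewrite /nm_mul.
case: (classic (leF x (¬ y))) => xNy.
  have e := eqF_mul0 HF xNy; split; first exact: represented_eqF e represented0.
  rewrite (embed_eqF e) embed0; have := embed_le rx (represented_neg ry) xNy.
  by rewrite embed_neg //; case: ifP; lia.
have e := eqF_mul_meet HF HL xNy; have [rxy exy] := embed_meet rx ry.
split; first exact: represented_eqF e rxy.
rewrite (embed_eqF e) exy; have := embed_lt rx (represented_neg ry) xNy.
by rewrite embed_neg //; case: ifP; lia.
Qed.

Lemma embed_imp x y : represented x -> represented y ->
  represented (x ⇒ y) /\ embed (x ⇒ y) = nm_imp T (embed x) (embed y).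
Proof.
move=> rx ry; rewrite impEneg.
have [rxy exy] := embed_mul rx (represented_neg ry).
by split; [apply: represented_neg | rewrite embed_neg // exy embed_neg].
Qed.

Lemma embed_eval n (v : 'I_n -> A) (t : form n) :
  (forall i, represented (v i)) ->
  represented (eval o v t) /\
  embed (eval o v t) = eval (chain_ops T) (fun i => inord (embed (v i))) t.
Proof.
move=> rv; elim: t => [i|||a [ra ea] b [rb eb]|a [ra ea] b [rb eb]
                        |a [ra ea] b [rb eb]|a [ra ea] b [rb eb]] /=.
- by split; rewrite // inordK // ltnS embed_le_top.
- by split; rewrite ?chainE ?embed0 //; apply: represented0.
- by split; rewrite ?chainE ?embed1 //; apply: represented1.
- by have [r ->] := embed_meet ra rb; rewrite chainE ea eb.
- by have [r ->] := embed_join ra rb; rewrite chainE ea eb.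
- by have [r ->] := embed_mul ra rb; rewrite chainE ea eb.
- by have [r ->] := embed_imp ra rb; rewrite chainE ea eb.
Qed.

End Embedding.

End NMAlgebra.

(** * Completeness with respect to one finite chain *)

Definition sep_top n := ((n.*2).+2).*2.+1.

Section Literals.
Variables (A : Type) (o : nm_ops A) (H : is_NM o) (n : nat) (v : 'I_n -> A).

Definition literals : seq A :=
  o_bot o :: o_top o :: [seq v i | i <- enum 'I_n] ++ [seq o_neg o (v i) | i <- enum 'I_n].

Lemma size_literals : (size literals).*2.+1 = sep_top n.
Proof. by rewrite /= size_cat !size_map -enumT size_enum_ord addnn. Qed.

Lemma In_literals_var i : List.In (v i) literals.
Proof.
by do 2 right; apply/List.in_or_app; left; apply/List.in_map/In_mem; rewrite mem_enum.
Qed.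

Lemma In_literals_neg y : List.In y literals -> List.In (o_neg o y) literals.
Proof.
case=> [<-|[<-|]]; first by rewrite neg0 //; right; left.
  by rewrite neg1 //; left.
move=> y_in; case: (List.in_app_or _ _ _ y_in) => /List.in_map_iff [i [<- _]].
  do 2 right; apply/List.in_or_app; right.
  by apply: (List.in_map (fun i => o_neg o (v i))); apply: In_mem; rewrite mem_enum.
by rewrite negK //; apply: In_literals_var.
Qed.

End Literals.

Lemma chain_separates A (o : nm_ops A) n (v : 'I_n -> A) (a b : form n) :
  is_NMm o -> eval o v a <> eval o v b ->
  exists w : 'I_n -> 'I_(sep_top n).+1,
    eval (chain_ops _) w a <> eval (chain_ops _) w b.
Proof.
move=> [H NMm_ax] neq_ab.
wlog ab : a b neq_ab / ~ o_le o (eval o v a) (eval o v b).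
  move=> gen; case: (classic (o_le o (eval o v a) (eval o v b))) => ab; last exact: gen.
  case: (classic (o_le o (eval o v b) (eval o v a))) => ba.
    by case: neq_ab; apply: (le_anti H).
  by have [w neq_w] := gen b a (nesym neq_ab) ba; exists w; apply: nesym.
have [F [HF HL Fab]] :
    exists F, [/\ filter o F, linear o F & ~ leF o F (eval o v a) (eval o v b)].
  by apply: exists_linear_filter => //; move/(le_impE H).
have F_proper : ~ F (o_bot o) by move=> F0; apply/Fab/(filter_up HF F0)/le0x.
have rv i : represented o F (literals o v) (v i) by apply/represented_s/In_literals_var.
have s0 : List.In (o_bot o) (literals o v) by left.
have sN : forall y, List.In y (literals o v) -> List.In (o_neg o y) (literals o v).
  exact: In_literals_neg.
have T_def := esym (size_literals o v).
have [ra ea] := embed_eval H HF HL NMm_ax F_proper s0 sN T_def a rv.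
have [rb eb] := embed_eval H HF HL NMm_ax F_proper s0 sN T_def b rv.
exists (fun i => inord (embed o F (literals o v) (sep_top n) (v i))) => eq_w.
have := embed_lt H HF HL NMm_ax F_proper s0 sN T_def ra rb Fab.
by rewrite ea eb eq_w ltnn.
Qed.

(** * Counting Boolean models *)

Lemma bool_NMm : is_NMm bool_ops.
Proof. by split; first split; rewrite /o_le /o_neg /o_biimp /o_sq /=; repeat case. Qed.

Lemma eq_eval A (o : nm_ops A) n (v v' : 'I_n -> A) t : v =1 v' -> eval o v t = eval o v' t.
Proof. by move=> vv'; elim: t => //= [a -> b ->|a -> b ->|a -> b ->|a -> b ->]. Qed.

Section Counting.
Variable n : nat.
Local Notation T := (sep_top n).
Local Notation C := 'I_T.+1.
Local Notation o := (chain_ops T).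

Lemma nm_equiv_chainP (a b : form n) :
  nm_equiv a b <-> forall w : 'I_n -> C, eval o w a = eval o w b.
Proof.
split=> [ab w|ab A oA NMm_A v]; first exact: ab _ _ (chain_NMm _) w.
by apply: NNPP => /(chain_separates NMm_A) [w]; apply.
Qed.

Lemma nm_equiv_sym (a b : form n) : nm_equiv a b -> nm_equiv b a.
Proof. by move=> ab A oA NMm_A v; rewrite (ab A oA NMm_A v). Qed.

Definition models (phi : form n) := [set mu : {ffun 'I_n -> bool} | eval bool_ops mu phi].

Lemma models_equiv a b : nm_equiv a b -> models a = models b.
Proof. by move=> ab; apply/setP => mu; rewrite !inE (ab _ _ bool_NMm mu). Qed.

Lemma card_models_valuation a b :
  (INR #|models a| + INR #|models b| =
   INR #|models (FOr a b)| + INR #|models (FAnd a b)|)%R.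
Proof.
have -> : models (FOr a b) = models a :|: models b by apply/setP => mu; rewrite !inE.
have -> : models (FAnd a b) = models a :&: models b by apply/setP => mu; rewrite !inE.
by rewrite -!plus_INR; congr INR; apply/esym/cardsUI.
Qed.

Lemma models0 : models FBot = set0.
Proof. by apply/setP => mu; rewrite !inE. Qed.

Definition FNeg (a : form n) := FImp a FBot.

(* Splitting along [x_i ⇒ ¬x_i] and [¬x_i ⇒ x_i] separates any two models that
   differ at x_i. *)
Lemma join_irred_models_le1 g : join_irred g -> #|models g| <= 1.
Proof.
move=> [_ g_irr]; apply/card_le1_eqP => mu1 mu2; rewrite !inE => g1 g2.
apply/ffunP => i; apply: NNPP => mu12.
pose p := FImp (FVar i) (FNeg (FVar i)); pose q := FImp (FNeg (FVar i)) (FVar i).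
have g_split : nm_equiv g (FOr (FAnd g p) (FAnd g q)).
  by apply/nm_equiv_chainP => w; apply/esym/chain_meet_prelin.
have no_model mu r : eval bool_ops mu g -> ~~ eval bool_ops mu r -> ~ nm_equiv g (FAnd g r).
  by move=> gmu rmu /(_ _ _ bool_NMm mu) /=; rewrite gmu (negbTE rmu).
wlog mu1i : mu1 mu2 g1 g2 mu12 / mu1 i.
  move=> gen; case mu1i: (mu1 i); first exact: (gen mu1 mu2).
  apply: (gen mu2 mu1) => //; first exact: nesym.
  by move: mu12; rewrite mu1i; case: (mu2 i).
have mu2i : ~~ mu2 i by move: mu12; rewrite mu1i; case: (mu2 i).
by case: (g_irr _ _ g_split); [apply: (no_model mu1) | apply: (no_model mu2)];
  rewrite //= ?mu1i ?(negbTE mu2i).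
Qed.

Lemma join_irred_idempotent_models g : join_irred g -> Defs.idempotent g -> #|models g| = 1.
Proof.
move=> g_irr g_idem; apply/anti_leq/andP; split; first exact: join_irred_models_le1.
have [w gw0] : exists w : 'I_n -> C, eval o w g <> o_bot o.
  by apply: NNPP => all0; case: g_irr => + _; apply; apply/nm_equiv_chainP => w;
     apply: NNPP => gw; apply: all0; exists w.
have g_high : high (eval o w g).
  have : o_mul o (eval o w g) (eval o w g) = eval o w g.
    exact: (proj1 (nm_equiv_chainP _ _) g_idem w).
  move: (eval o w g) gw0 => x x0 /(congr1 (@nat_of_ord _)).
  have : x <> 0 :> nat by move=> x_0; apply/x0/ord_inj; rewrite x_0 chainE.
  by rewrite /high chainE /nm_mul /sep_top; case: ifP; lia.
apply/card_gt0P; exists [ffun i => high (w i)]; rewrite inE.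
by rewrite (eq_eval _ _ (ffunE _)) -high_eval.
Qed.

Lemma join_irred_not_idempotent_models g :
  join_irred g -> ~ Defs.idempotent g -> models g = set0.
Proof.
move=> [_ g_irr] g_nidem.
have g_split : nm_equiv g (FOr (FConj g g) (FAnd g (FNeg g))).
  by apply/nm_equiv_chainP => w; apply/esym/chain_sq_join_meet_neg.
case: (g_irr _ _ g_split) => [/nm_equiv_sym //|g_neg].
apply/setP => mu; rewrite !inE; apply/negP => gmu.
by move: (g_neg _ _ bool_NMm mu) => /=; rewrite gmu.
Qed.

Lemma is_chi_plus_models : is_chi_plus (fun phi => INR #|models phi|).
Proof.
split; [|split; [|split]].
- by move=> a b /models_equiv ->.
- exact: card_models_valuation.
- by rewrite models0 cards0.
- move=> g g_irr; split=> [g_idem|g_nidem].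
    by rewrite join_irred_idempotent_models.
  by rewrite join_irred_not_idempotent_models // cards0.
Qed.

Definition weight (phi : form n) := \sum_(w : {ffun 'I_n -> C}) eval o w phi.

Lemma sum_ltn (I : finType) (f g : I -> nat) i0 :
  (forall i, f i <= g i) -> f i0 < g i0 -> \sum_i f i < \sum_i g i.
Proof.
move=> fg fg0; rewrite (bigD1 i0) //= [X in _ < X](bigD1 i0) //= -addSn.
by apply: leq_add => //; apply: leq_sum.
Qed.

Lemma weight_lt (a phi : form n) :
  (forall w, eval o w a <= eval o w phi) -> ~ nm_equiv a phi -> weight a < weight phi.
Proof.
move=> le_a a_phi; have [w neq_w] : exists w : {ffun 'I_n -> C}, eval o w a <> eval o w phi.
  apply: NNPP => eq_a; apply/a_phi/nm_equiv_chainP => w; apply: NNPP => neq_w.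
  by apply: eq_a; exists [ffun i => w i]; rewrite !(eq_eval _ _ (ffunE _)).
apply: sum_ltn => [w'|]; first exact: le_a.
by rewrite ltn_neqAle le_a andbT; apply/eqP => /ord_inj /neq_w.
Qed.

Lemma reducible_join_split (phi : form n) : ~ nm_equiv phi FBot -> ~ join_irred phi ->
  exists a b, [/\ nm_equiv phi (FOr a b), ~ nm_equiv a phi & ~ nm_equiv b phi].
Proof.
move=> phi_n0 phi_red; apply: NNPP => no_split; apply: phi_red; split=> // a b phi_ab.
apply: NNPP => /not_or_and [a_phi b_phi]; apply: no_split.
by exists a, b; split=> // /nm_equiv_sym.
Qed.

Lemma join_split_weight_lt (phi a b : form n) :
  nm_equiv phi (FOr a b) -> ~ nm_equiv a phi -> ~ nm_equiv b phi ->
  [/\ weight a < weight phi, weight b < weight phi & weight (FAnd a b) < weight phi].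
Proof.
move=> phi_ab a_phi b_phi.
have le_phi c : (forall w, eval o w c <= eval o w (FOr a b)) ->
    forall w, eval o w c <= eval o w phi.
  by move=> le_c w; rewrite (proj1 (nm_equiv_chainP _ _) phi_ab w).
have le_a : forall w, eval o w a <= eval o w phi.
  by apply: le_phi => w /=; rewrite chainE leq_maxl.
have le_b : forall w, eval o w b <= eval o w phi.
  by apply: le_phi => w /=; rewrite chainE leq_maxr.
have le_ab : forall w, eval o w (FAnd a b) <= eval o w phi.
  by move=> w; apply: leq_trans (le_a w); rewrite /= chainE geq_minl.
have ab_phi : ~ nm_equiv (FAnd a b) phi.
  move=> /nm_equiv_chainP ab_phi; apply/a_phi/nm_equiv_chainP => w.
  by apply/ord_inj/anti_leq; rewrite le_a -(ab_phi w) /= chainE geq_minl.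
by split; apply: weight_lt.
Qed.

(* A valuation is determined by its values on ⊥ and on the join irreducibles:
   induction on the weight of a formula. *)
Lemma is_chi_plus_unique nu phi : is_chi_plus nu -> nu phi = INR #|models phi|.
Proof.
move=> [nu_equiv [nu_val [nu0 nu_irr]]].
elim: {phi}(weight phi).+1 {-2}phi (ltnSn (weight phi)) => // m IHm phi.
rewrite ltnS => phi_m.
case: (classic (nm_equiv phi FBot)) => [phi0|phi_n0].
  by rewrite (nu_equiv _ _ phi0) nu0 (models_equiv phi0) models0 cards0.
case: (classic (join_irred phi)) => [phi_irr|phi_red].
  have [nu1 nu0'] := nu_irr _ phi_irr.
  case: (classic (Defs.idempotent phi)) => [phi_idem|phi_nidem].
    by rewrite nu1 // join_irred_idempotent_models.
  by rewrite nu0' // join_irred_not_idempotent_models // cards0.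
have [a [b [phi_ab a_phi b_phi]]] := reducible_join_split phi_n0 phi_red.
have [wa wb wab] := join_split_weight_lt phi_ab a_phi b_phi.
rewrite (nu_equiv _ _ phi_ab) (models_equiv phi_ab).
have := nu_val a b.
rewrite (IHm a (leq_trans wa phi_m)) (IHm b (leq_trans wb phi_m)).
rewrite (IHm _ (leq_trans wab phi_m)).
by have := card_models_valuation a b; lra.
Qed.

End Counting.

(* The argument works for every n. *)
Theorem theorem8 (n : nat) (hn : (1 <= n)%N) :
  (exists nu : form n -> R, is_chi_plus nu) /\
  forall nu : form n -> R, is_chi_plus nu ->
    forall phi : form n,
      nu phi = INR #|[set mu : {ffun 'I_n -> bool} | eval bool_ops mu phi]|.
Proof.
split; first by exists (fun phi => INR #|models phi|); apply: is_chi_plus_models.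
by move=> nu nu_chi phi; apply: is_chi_plus_unique.
Qed.
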